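(* Let $(\Omega,\sqsubseteq)$ be a poset and $\mathcal{A}:\Omega\to\wp(\Omega)$ satisfy awareness persistence (if $\omega'\sqsubseteq\omega$ then $\mathcal{A}(\omega)\subseteq\mathcal{A}(\omega')$) and awareness refinability (if $\nu\notin\mathcal{A}(\omega)$ then there is $\omega'\sqsubseteq\omega$ such that $\nu\notin\mathcal{A}(\omega'')$ for all $\omega''\sqsubseteq\omega'$). Then for any $E\in\mathcal{RO}(\Omega,\sqsubseteq)$, we have $\mathbf{A}(E)\in\mathcal{RO}(\Omega,\sqsubseteq)$, where $\omega\in\mathbf{A}(E)$ iff for all $\omega'\sqsubseteq\omega$ and all $\nu\in\mathcal{A}(\omega')$, $\max(E\cap\downarrow\nu)\cup\max(\neg E\cap\downarrow\nu)\subseteq\mathcal{A}(\omega')$.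
   Context: $\downarrow E=\{\omega\mid\omega\sqsubseteq\nu\text{ for some }\nu\in E\}$, $\downarrow\nu=\downarrow\{\nu\}$; $\rho(E)=\{\omega\mid\forall\omega'\sqsubseteq\omega\ \exists\omega''\sqsubseteq\omega'\colon\omega''\in\downarrow E\}$; $\mathcal{RO}(\Omega,\sqsubseteq)=\{E\subseteq\Omega\mid\rho(E)=E\}$ (the regular open sets); $\neg E=\{\omega\mid\forall\omega'\sqsubseteq\omega,\ \omega'\notin E\}$; $\max(E)=\{\omega\in E\mid\text{there is no }\nu\in E\text{ with }\omega\sqsubseteq\nu\text{ and }\nu\not\sqsubseteq\omega\}$. *)

Set Implicit Arguments.

Section Defs.
Variable Omega : Type.
Variable le : Omega -> Omega -> Prop.

Definition is_poset : Prop :=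
  (forall w, le w w) /\
  (forall w v u, le w v -> le v u -> le w u) /\
  (forall w v, le w v -> le v w -> w = v).

Definition subset (E F : Omega -> Prop) : Prop := forall w, E w -> F w.

Definition down (E : Omega -> Prop) : Omega -> Prop :=
  fun w => exists v, E v /\ le w v.
Definition down1 (nu : Omega) : Omega -> Prop := down (fun v => v = nu).

Definition rho (E : Omega -> Prop) : Omega -> Prop :=
  fun w => forall w', le w' w -> exists w'', le w'' w' /\ down E w''.

Definition regular_open (E : Omega -> Prop) : Prop :=
  forall w, rho E w <-> E w.

Definition negE (E : Omega -> Prop) : Omega -> Prop :=
  fun w => forall w', le w' w -> ~ E w'.

Definition maxset (E : Omega -> Prop) : Omega -> Prop :=
  fun w => E w /\ ~ (exists v, E v /\ le w v /\ ~ le v w).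

Definition setI (E F : Omega -> Prop) : Omega -> Prop := fun w => E w /\ F w.
Definition setU (E F : Omega -> Prop) : Omega -> Prop := fun w => E w \/ F w.

Definition awareness_persistence (A : Omega -> Omega -> Prop) : Prop :=
  forall w w', le w' w -> subset (A w) (A w').

Definition awareness_refinability (A : Omega -> Omega -> Prop) : Prop :=
  forall w nu, ~ A w nu ->
    exists w', le w' w /\ forall w'', le w'' w' -> ~ A w'' nu.

Definition Aop (A : Omega -> Omega -> Prop) (E : Omega -> Prop) : Omega -> Prop :=
  fun w => forall w', le w' w -> forall nu, A w' nu ->
    subset (setU (maxset (setI E (down1 nu))) (maxset (setI (negE E) (down1 nu))))
           (A w').
End Defs.

(* The operator 𝐀 only depends on E through the sets S ν = max(E ∩ ↓ν) ∪ max(¬E ∩ ↓ν),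
   and w ∈ 𝐀(E) says that every refinement w' of w is aware of S ν whenever it is
   aware of ν.  Such a set is down-closed, hence contained in its regularization.
   Conversely, let w ∈ ρ(𝐀(E)), w' ⊑ w, ν ∈ 𝒜(w') and x ∈ S ν, and suppose x ∉ 𝒜(w').
   Refinability gives w1 ⊑ w' below which x is never in the awareness set, and
   w ∈ ρ(𝐀(E)) gives w2 ⊑ w1 with w2 ∈ 𝐀(E).  By persistence ν ∈ 𝒜(w2), so
   x ∈ 𝒜(w2): a contradiction. *)
From Stdlib Require Import Classical.

Section Regularization.
Variables (Omega : Type) (le : Omega -> Omega -> Prop).
Hypothesis le_refl : forall w, le w w.
Hypothesis le_trans : forall w v u, le w v -> le v u -> le w u.

Lemma subset_rho (E : Omega -> Prop) : subset E (rho le E).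
Proof.
  intros w Ew w' Hw'. exists w'. split; [apply le_refl |]. exists w. now split.
Qed.

Lemma regular_open_of_rho_subset (E : Omega -> Prop) :
  subset (rho le E) E -> regular_open le E.
Proof. intros HrhoE w. split; [apply HrhoE | apply subset_rho]. Qed.

Variable A : Omega -> Omega -> Prop.
Hypothesis A_persistent : awareness_persistence le A.
Hypothesis A_refinable : awareness_refinability le A.

Definition Aclosed (S : Omega -> Omega -> Prop) : Omega -> Prop :=
  fun w => forall w', le w' w -> forall nu, A w' nu -> subset (S nu) (A w').

Lemma Aclosed_down (S : Omega -> Omega -> Prop) w v :
  Aclosed S v -> le w v -> Aclosed S w.
Proof. intros Hv Hwv w' Hw'. apply Hv. eapply le_trans; eauto. Qed.

Lemma rho_Aclosed (S : Omega -> Omega -> Prop) :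
  subset (rho le (Aclosed S)) (Aclosed S).
Proof.
  intros w Hrho w' Hw' nu Hnu x Hx.
  apply NNPP. intros Hnx.
  destruct (A_refinable w' x Hnx) as [w1 [Hw1 Hunaware]].
  destruct (Hrho w1 (le_trans _ _ _ Hw1 Hw')) as [w2 [Hw2 [v [Hv Hw2v]]]].
  assert (Hw2closed : Aclosed S w2) by exact (Aclosed_down _ _ _ Hv Hw2v).
  apply (Hunaware w2 Hw2), (Hw2closed w2 (le_refl w2) nu); [| exact Hx].
  exact (A_persistent w' w2 (le_trans _ _ _ Hw2 Hw1) nu Hnu).
Qed.

Lemma regular_open_Aclosed (S : Omega -> Omega -> Prop) :
  regular_open le (Aclosed S).
Proof. apply regular_open_of_rho_subset, rho_Aclosed. Qed.

End Regularization.

Theorem lemma3p4 (Omega : Type) (le : Omega -> Omega -> Prop)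
  (A : Omega -> Omega -> Prop) :
  is_poset le ->
  awareness_persistence le A ->
  awareness_refinability le A ->
  forall E : Omega -> Prop, regular_open le E -> regular_open le (Aop le A E).
Proof.
  intros [le_refl [le_trans _]] A_persistent A_refinable E _.
  exact (regular_open_Aclosed _ _ le_refl le_trans A A_persistent A_refinable
           (fun nu => setU (maxset le (setI E (down1 le nu)))
                           (maxset le (setI (negE le E) (down1 le nu))))).
Qed.
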